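(* For every generalized line graph $G$, the competition number satisfies $k(G)\le 2$.
   Context: All graphs are finite and simple. For a digraph $D$, its competition graph $C(D)$ is the graph with vertex set $V(D)$ in which two distinct vertices $u,v$ are adjacent iff there is a vertex $x$ with arcs $(u,x),(v,x)\in A(D)$. The competition number $k(G)$ of a graph $G$ is the smallest nonnegative integer $k$ such that $G$ together with $k$ new isolated vertices is the competition graph of an acyclic digraph. For a positive integer $m$, the cocktail party graph $CP(m)$ is the complete multipartite graph with $m$ parts each of size two (vertices $x_l,y_l$, $l\in\{1,\dots,m\}$; $x_i x_j$, $y_iy_j$ adjacent for $i<j$, $x_iy_j$ adjacent for $i\ne j$); $CP(1)$ is two vertices with no edge. A vertex-weighted graph $(H,f)$ is a graph $H$ with a function $f:V(H)\to\mathbb{Z}_{\ge 0}$. The generalized line graph $L(H,f)$ is obtained from the disjoint union of the line graph $L(H)$ (vertex set $E(H)$, two distinct edges adjacent iff they share an endpoint) and the graphs $Q_v:=CP(f(v))$ for each $v\in V(H)$ with $f(v)>0$, by adding all edges between every vertex of $Q_v$ and every $e\in V(L(H))$ that is incident to $v$ in $H$. A graph is a generalized line graph if it is isomorphic to $L(H,f)$ for some vertex-weighted graph $(H,f)$. *)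

From mathcomp Require Import all_boot.
Set Implicit Arguments. Unset Strict Implicit. Unset Printing Implicit Defensive.

Record sgraph := SGraph {
  svert :> finType;
  sadj : rel svert;
  sadj_sym : symmetric sadj;
  sadj_irr : irreflexive sadj }.

Section Digraphs.
Variable W : finType.

Definition acyclicb (D : rel W) : bool :=
  [forall x, forall y, D x y ==> ~~ connect D y x].

Definition comp_graph (D : rel W) : rel W :=
  fun u v => (u != v) && [exists x, D u x && D v x].

Definition ffrel (D : {ffun W * W -> bool}) : rel W := fun x y => D (x, y).
End Digraphs.

Definition add_isolated (T : finType) (g : rel T) (k : nat) : rel (T + 'I_k) :=
  fun a b => match a, b with inl u, inl v => g u v | _, _ => false end.
Arguments add_isolated {T} g k.

(** G together with k isolated vertices is the competition graph of an
    acyclic digraph (arc relations encoded as finite functions, so this is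
    a boolean predicate) *)
Definition comp_repr (G : sgraph) (k : nat) : bool :=
  [exists D : {ffun ((G + 'I_k) * (G + 'I_k))%type -> bool},
     acyclicb (ffrel D) &&
     [forall u, forall v, comp_graph (ffrel D) u v == add_isolated (@sadj G) k u v]].

Lemma comp_repr_exists (G : sgraph) : exists k, comp_repr G k.
Proof.
set T := (svert G).
exists #|{: (T * T)%type}|.
pose D : {ffun ((T + 'I_#|{: (T * T)%type}|) * (T + 'I_#|{: (T * T)%type}|))%type -> bool} :=
  [ffun p => match p with
             | (inl u, inr i) => let ab := enum_val i in
                 sadj ab.1 ab.2 && ((u == ab.1) || (u == ab.2))
             | _ => false end].
have Dr : forall a b, ffrel D a b -> exists u i, a = inl u /\ b = inr i.
  by move=> [u|i] [v|j]; rewrite /ffrel ffunE // => _; exists u, j.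
apply/existsP; exists D; apply/andP; split.
  apply/forallP=> x; apply/forallP=> y; apply/implyP=> /Dr [u [i [-> ->]]].
  apply/negP=> /connectP [p Hp Hl].
  case: p Hp Hl => [|z p] /=; first by [].
  by case/andP=> /Dr [u' [i' [Hi _]]].
apply/forallP=> a; apply/forallP=> b; apply/eqP.
rewrite /comp_graph /add_isolated.
case: a => [u|i]; last first.
  by case: b => [v|j]; apply/negbTE/negP=> /andP [_ /existsP [x /andP [/Dr [? [? [H _]]] _]]].
case: b => [v|j]; last first.
  by apply/negbTE/negP=> /andP [_ /existsP [x /andP [_ /Dr [? [? [H _]]]]]].
apply/idP/idP.
  case/andP=> neq /existsP [x /andP [Hu Hv]].
  case: x Hu Hv => [w|i]; rewrite /ffrel !ffunE //=.
  idtac.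
  case/andP=> Hab /orP [] /eqP Hu; case/andP=> _ /orP [] /eqP Hv.
  - by move: neq; rewrite Hu Hv eqxx.
  - by rewrite Hu Hv.
  - by rewrite Hu Hv sadj_sym.
  - by move: neq; rewrite Hu Hv eqxx.
move=> Huv; apply/andP; split.
  apply/negP=> /eqP [E]; by move: Huv; rewrite E sadj_irr.
apply/existsP; exists (inr (enum_rank (u, v))).
by rewrite /ffrel !ffunE enum_rankK /= Huv !eqxx ?orbT.
Qed.

Definition competition_number (G : sgraph) : nat :=
  ex_minn (comp_repr_exists G).

Section GenLine.
Variables (U : finType) (h : rel U) (f : U -> nat).

Definition is_edge (e : {set U}) : bool :=
  [exists u, exists v, h u v && (e == [set u; v])].
Definition edge_t := {e : {set U} | is_edge e}.

(* vertices of Q_v = CP(f v): (v, (l, false)) is x_l, (v, (l, true)) is y_l *)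
Definition cp_t := {v : U & ('I_(f v) * bool)%type}.

Definition gl_vert := (edge_t + cp_t)%type.

Definition gl_adj : rel gl_vert := fun a b =>
  match a, b with
  | inl e1, inl e2 => (e1 != e2) && ~~ [disjoint val e1 & val e2]
  | inl e, inr q | inr q, inl e => tag q \in val e
  | inr q1, inr q2 => (tag q1 == tag q2) &&
                      (nat_of_ord (tagged q1).1 != nat_of_ord (tagged q2).1)
  end.
End GenLine.
Arguments gl_adj {U} h f.

Definition isomorphic (T1 T2 : finType) (g1 : rel T1) (g2 : rel T2) : Prop :=
  exists phi : T1 -> T2, bijective phi /\ forall x y, g1 x y = g2 (phi x) (phi y).

Definition is_gen_line_graph (G : sgraph) : Prop :=
  exists (U : finType) (h : rel U) (f : U -> nat),
    [/\ symmetric h, irreflexive h & isomorphic (@sadj G) (gl_adj h f)].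

(* Cover the edges of L(H, f) by cliques (see [gl_clique]) and give each used clique its own
   sink, the arcs going from the members of a clique to its sink. The sinks are the two new
   isolated vertices and previously eliminated vertices: eliminate the vertices one at a time,
   so that when [b] sinks are free the eliminated vertex lies in at most [b] cliques whose
   members are all still present; those cliques take free sinks and the vertex itself becomes
   free. Every arc then points to an isolated vertex or to an earlier eliminated one, so the
   digraph is acyclic. Starting from two free sinks, first clear the [Q_v] one after another,
   each time ending with at least two free sinks again, then remove the edges of H, preferring
   an edge one of whose end stars [E(w)] is no longer complete; when there is none, double
   counting shows that at least two sinks are free. *)

From mathcomp Require Import all_boot.
From mathcomp Require Import zify.
Set Implicit Arguments. Unset Strict Implicit. Unset Printing Implicit Defensive.

Definition competition_repr (T : finType) (g : rel T) (k : nat) (D : rel (T + 'I_k)) :=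
  acyclicb D && [forall u, forall v, comp_graph D u v == add_isolated g k u v].
Arguments competition_repr {T} g k D.

Lemma competition_repr_ext (T : finType) (g : rel T) k (D1 D2 : rel (T + 'I_k)) :
  D1 =2 D2 -> competition_repr g k D1 = competition_repr g k D2.
Proof.
move=> E; rewrite /competition_repr /acyclicb /comp_graph.
congr (_ && _).
  by apply: eq_forallb => x; apply: eq_forallb => y; rewrite E (eq_connect E).
apply: eq_forallb => u; apply: eq_forallb => v; congr (_ == _); congr (_ && _).
by apply: eq_existsb => w; rewrite !E.
Qed.

Lemma rank_path (W : Type) (D : rel W) (r : W -> nat) :
  (forall a c, D a c -> r a < r c) -> forall x p, path D x p -> r x <= r (last x p).
Proof.
move=> Dr x p; elim: p x => [|y p IH] x //= /andP [/Dr lt_xy /IH].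
exact/leq_trans/ltnW.
Qed.

Lemma acyclicb_rank (W : finType) (D : rel W) (r : W -> nat) :
  (forall a c, D a c -> r a < r c) -> acyclicb D.
Proof.
move=> Dr; apply/forallP=> x; apply/forallP=> y; apply/implyP=> /Dr lt_xy.
apply/negP=> /connectP [p /(rank_path Dr) le_yx x_last].
by move: lt_xy; rewrite x_last ltnNge le_yx.
Qed.

Lemma acyclicb_relpre (W W' : finType) (m : W -> W') (D : rel W') :
  acyclicb D -> acyclicb (relpre m D).
Proof.
move=> /forallP acD; apply/forallP=> x; apply/forallP=> y; apply/implyP=> Dxy.
apply: contra (implyP (forallP (acD (m x)) (m y)) Dxy) => /connectP [p Dp ->].
by apply/connectP; exists (map m p); rewrite ?path_map ?last_map.
Qed.

Lemma competition_repr_iso (T1 T2 : finType) (g1 : rel T1) (g2 : rel T2) (phi : T1 -> T2) k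
    (D : rel (T2 + 'I_k)) :
  bijective phi -> {mono phi : x y / g1 x y >-> g2 x y} -> competition_repr g2 k D ->
  exists D1 : rel (T1 + 'I_k), competition_repr g1 k D1.
Proof.
move=> [psi phiK psiK] phi_mono /andP [acD /forallP reprD].
pose lift (a : T1 + 'I_k) : T2 + 'I_k := match a with inl x => inl (phi x) | inr i => inr i end.
pose unlift (a : T2 + 'I_k) : T1 + 'I_k := match a with inl x => inl (psi x) | inr i => inr i end.
have liftK : cancel lift unlift by case=> //= x; rewrite phiK.
have unliftK : cancel unlift lift by case=> //= x; rewrite psiK.
exists (relpre lift D); rewrite /competition_repr acyclicb_relpre //=.
apply/forallP=> u; apply/forallP=> v.
have -> : comp_graph (relpre lift D) u v = comp_graph D (lift u) (lift v).
  rewrite /comp_graph (inj_eq (can_inj liftK)); congr (_ && _).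
  apply/existsP/existsP=> [[w Dw]|[w]]; first by exists (lift w).
  by exists (unlift w); rewrite /= unliftK.
rewrite (eqP (forallP (reprD (lift u)) (lift v))).
by case: u v => [x|i] [y|j] //=; rewrite phi_mono.
Qed.

Lemma competition_repr_comp_repr (G : sgraph) k (D : rel (G + 'I_k)) :
  competition_repr (@sadj G) k D -> comp_repr G k.
Proof.
move=> reprD; apply/existsP; exists [ffun p => D p.1 p.2].
have E : ffrel [ffun p => D p.1 p.2] =2 D by move=> a b; rewrite /ffrel ffunE.
by rewrite -(competition_repr_ext _ E) in reprD.
Qed.

Lemma competition_number_le (G : sgraph) k : comp_repr G k -> competition_number G <= k.
Proof. by rewrite /competition_number => reprG; case: ex_minnP => m _ /(_ k reprG). Qed.


Lemma card_le_injection (aT rT : finType) (A : {set aT}) (B : {set rT}) (y0 : rT) :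
  #|A| <= #|B| ->
  exists2 tau : aT -> rT, {in A, forall x, tau x \in B} & {in A &, injective tau}.
Proof.
move=> le_AB; have index_lt x : x \in A -> index x (enum A) < size (enum B).
  by move=> xA; rewrite -cardE (leq_trans _ le_AB) // cardE index_mem mem_enum.
exists (fun x => nth y0 (enum B) (index x (enum A))).
  by move=> x /index_lt lt_x; rewrite -mem_enum mem_nth.
move=> x1 x2 x1A x2A /eqP; rewrite nth_uniq ?enum_uniq ?index_lt // => /eqP.
by apply: (index_inj x1); rewrite mem_enum.
Qed.

Section Elimination.
Variables (T I : finType) (C : I -> pred T) (used : pred I).
Implicit Types (S : {set T}) (i j : I) (x y z : T).

Definition live S i := used i && [forall z, C i z ==> (z \in S)].
Definition live_through S x := [set i | live S i && C i x].
Definition live_deg S x := #|live_through S x|.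

(* [peelable S b]: the vertices of [S] can be eliminated one by one while [b]
   sinks are available; eliminating [x] gives a fresh sink to each live clique
   through [x], and [x] itself becomes a sink for the cliques that stay live. *)
Inductive peelable : {set T} -> nat -> Prop :=
| peel_done S b : (forall i, ~~ live S i) -> peelable S b
| peel_step S x b : x \in S -> live_deg S x <= b ->
    peelable (S :\ x) (b - live_deg S x).+1 -> peelable S b.

Lemma peelable_mono S b b' : b <= b' -> peelable S b -> peelable S b'.
Proof.
move=> le_bb' peelS; elim: peelS b' le_bb' => {S b} [S b dead|S x b xS le_deg _ IH] b' le_bb'.
  exact: peel_done.
by apply: (peel_step xS (leq_trans le_deg le_bb')); apply: IH; lia.
Qed.

Lemma live_notin S i z : C i z -> z \notin S -> ~~ live S i.
Proof. by move=> Ciz zS; apply/nandP; right; apply/forallPn; exists z; rewrite Ciz. Qed.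

Lemma live_mem S i z : live S i -> C i z -> z \in S.
Proof. by case/andP=> _ /forallP /(_ z) /implyP. Qed.

Lemma live_subset S S' i : S' \subset S -> live S' i -> live S i.
Proof.
move=> sub /andP [used_i /forallP inS']; rewrite /live used_i; apply/forallP=> z.
by apply/implyP=> /(implyP (inS' z)) /(subsetP sub).
Qed.

Lemma liveD1 S x i : live (S :\ x) i = live S i && ~~ C i x.
Proof.
rewrite /live; case: (used i) => //=; apply/forallP/andP.
  move=> inSx; split.
    by apply/forallP=> z; apply/implyP=> /(implyP (inSx z)); rewrite inE => /andP [].
  by apply/negP=> /(implyP (inSx x)); rewrite !inE eqxx.
case=> /forallP inS Cx z; apply/implyP=> Cz; rewrite !inE (implyP (inS z) Cz) andbT.
by apply: contraNneq Cx => <-.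
Qed.

Lemma live_setT i : live [set: T] i = used i.
Proof. by rewrite /live andb_idr // => _; apply/forallP=> z; rewrite in_setT implybT. Qed.

Definition sink_assignment n S (P : {set T + 'I_n}) (sink : I -> T + 'I_n) (rank : T -> nat) :=
  [/\ forall i, live S i -> sink i \in P :|: [set inl y | y in S],
      forall i j, live S i -> live S j -> sink i = sink j -> i = j,
      forall i z y, live S i -> C i z -> sink i = inl y -> y \in S -> rank z < rank y &
      forall z, z \in S -> rank z <= #|S| ].

Lemma sink_assignment_step n S x (P : {set T + 'I_n}) (tau sink : I -> T + 'I_n) rank :
  x \in S -> (forall y, inl y \in P -> y \notin S) ->
  {in live_through S x, forall i, tau i \in P} -> {in live_through S x &, injective tau} ->
  sink_assignment (S :\ x) (inl x |: (P :\: tau @: live_through S x)) sink rank ->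
  sink_assignment S P (fun i => if i \in live_through S x then tau i else sink i)
                      (fun z => if z == x then #|S| else rank z).
Proof.
set A := live_through S x; set P' := inl x |: _ => xS P_out tauP tau_inj.
case=> sinkP sink_inj rank_lt rank_le.
have xP : inl x \notin P by apply/negP=> /P_out; rewrite xS.
have liveSx i : live S i -> i \notin A -> live (S :\ x) i.
  by move=> live_i; rewrite liveD1 inE live_i /= => ->.
have tau_out i : i \in A -> tau i \notin P' :|: [set inl y | y in S :\ x].
  move=> iA; rewrite in_setU in_setU1 in_setD (imset_f _ iA) /= orbF negb_or.
  apply/andP; split; first by apply: contraNneq xP => <-; apply: tauP.
  apply/imsetP=> [[y]]; rewrite inE => /andP [_ yS] tau_y.
  by move: (tauP i iA); rewrite tau_y => /P_out; rewrite yS.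
have tau_sink i j : i \in A -> live S j -> j \notin A -> tau i != sink j.
  by move=> iA live_j jA; apply: contraNneq (tau_out i iA) => ->; apply/sinkP/liveSx.
split.
- move=> i live_i; case: ifP => [iA|/negbT iA]; first by rewrite inE tauP.
  apply: subsetP (sinkP i (liveSx i live_i iA)); apply/subsetP=> w.
  rewrite !inE => /orP [/orP [/eqP ->|/andP [_ ->]] //|/imsetP [y]].
    by rewrite imset_f ?orbT.
  by rewrite inE => /andP [_ yS] ->; rewrite imset_f ?orbT.
- move=> i j live_i live_j; case: ifP => iA; case: ifP => jA.
  + exact: tau_inj.
  + by move/eqP; rewrite (negbTE (tau_sink i j iA live_j (negbT jA))).
  + by move/esym/eqP; rewrite (negbTE (tau_sink j i jA live_i (negbT iA))).
  + by apply: sink_inj; apply: liveSx => //; apply: negbT.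
- move=> i z y live_i Ciz; case: ifP => iA.
    by move=> tau_y yS; move: (tauP i iA); rewrite tau_y => /P_out; rewrite yS.
  have live'_i := liveSx i live_i (negbT iA).
  have zSx : z \in S :\ x := live_mem live'_i Ciz.
  have [zx|_] := eqVneq z x; first by move: zSx; rewrite zx !inE eqxx.
  move=> sink_y yS; case: eqP => [_|/eqP yx].
    by apply: leq_ltn_trans (rank_le z zSx) _; rewrite [#|S|](cardsD1 x) xS.
  by apply: rank_lt live'_i Ciz sink_y _; rewrite !inE yx.
- move=> z zS; case: eqP => // /eqP zx.
  have zSx : z \in S :\ x by rewrite !inE zx.
  exact: leq_trans (rank_le z zSx) (subset_leq_card (subD1set S x)).
Qed.

Lemma peelable_sinks n S b : peelable S b ->
  forall P : {set T + 'I_n.+1}, b <= #|P| -> (forall y, inl y \in P -> y \notin S) ->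
  exists sink rank, sink_assignment S P sink rank.
Proof.
elim=> {S b} [S b dead|S x b xS le_deg _ IH] P le_bP P_out.
  exists (fun _ => inr ord0), (fun _ => 0).
  by split=> [i|i j|i z y|//]; rewrite (negbTE (dead i)).
have [tau tauP tau_inj] := card_le_injection (inl x) (leq_trans le_deg le_bP).
set P' := inl x |: (P :\: tau @: live_through S x).
have P'_out y : inl y \in P' -> y \notin S :\ x.
  rewrite !inE => /orP [/eqP [->]|/andP [_ /P_out yS]]; first by rewrite eqxx.
  by rewrite negb_and yS orbT.
have le_bP' : (b - live_deg S x).+1 <= #|P'|.
  have xP : inl x \notin P by apply/negP=> /P_out; rewrite xS.
  rewrite cardsU1 cardsD (setIidPr _) ?card_in_imset // ?inE ?negb_and ?xP ?orbT.
    by rewrite add1n ltnS leq_sub2r.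
  by apply/subsetP=> _ /imsetP [i iA ->]; apply: tauP.
have [sink [rank assignment]] := IH P' le_bP' P'_out.
by exists (fun i => if i \in live_through S x then tau i else sink i),
  (fun z => if z == x then #|S| else rank z); apply: sink_assignment_step.
Qed.

Variable g : rel T.
Hypothesis g_irr : irreflexive g.
Hypothesis used_clique : forall i u v, used i -> C i u -> C i v -> u != v -> g u v.
Hypothesis used_cover : forall u v, g u v -> exists2 i, used i & C i u && C i v.

Lemma peelable_competition_repr k : peelable [set: T] k.+1 ->
  exists D : rel (T + 'I_k.+1), competition_repr g k.+1 D.
Proof.
move=> peelT; pose P : {set T + 'I_k.+1} := [set inr i | i : 'I_k.+1].
have cardP : k.+1 <= #|P| by rewrite card_imset ?card_ord //; move=> i j [].
have P_out y : inl y \in P -> y \notin [set: T] by case/imsetP.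
have [sink [rank [_ sink_inj rank_lt rank_le]]] := peelable_sinks peelT cardP P_out.
pose C' i (a : T + 'I_k.+1) := if a is inl z then C i z else false.
pose D a c := [exists i, [&& used i, C' i a & sink i == c]].
exists D; apply/andP; split.
  apply: (@acyclicb_rank _ D (fun a => if a is inl z then rank z else #|T|.+1)).
  move=> [z|j] c /existsP [i /and3P [used_i /= Ciz /eqP <-]] //.
  case E: (sink i) => [y|j']; first by apply: rank_lt E _; rewrite ?live_setT ?in_setT.
  by rewrite ltnS -cardsT rank_le ?in_setT.
have D_inr (j : 'I_k.+1) c : ~~ D (inr j) c by apply/existsPn=> i; rewrite /= andbF.
apply/forallP=> u; apply/forallP=> v; apply/eqP; rewrite /comp_graph.
case: u => [a|j]; last first.
  by apply/negbTE/nandP; right; apply/existsPn=> c; rewrite (negbTE (D_inr j c)).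
case: v => [b|j]; last first.
  by apply/negbTE/nandP; right; apply/existsPn=> c; rewrite (negbTE (D_inr j c)) andbF.
apply/idP/idP => [|/= gab].
  case/andP=> ne /existsP [c /andP [/existsP [i /and3P [used_i Cia /eqP si]]]].
  case/existsP=> j /and3P [used_j Cjb /eqP sj].
  have eq_ij : i = j by apply: sink_inj; rewrite ?live_setT // si sj.
  by rewrite -eq_ij in Cjb; apply: used_clique used_i Cia Cjb _; apply: contra ne => /eqP ->.
apply/andP; split; first by apply: contraTneq gab => -[->]; rewrite g_irr.
have [i used_i /andP [Cia Cib]] := used_cover gab.
apply/existsP; exists (sink i).
by apply/andP; split; apply/existsP; exists i; rewrite used_i /= ?Cia ?Cib eqxx.
Qed.
End Elimination.

Lemma card_set_pred1 (T : finType) (a : pred T) (j : T) : #|[set i | (i == j) && a i]| = a j.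
Proof.
case: (boolP (a j)) => aj /=.
  by rewrite -(cards1 j); apply: eq_card => i; rewrite !inE andb_idr // => /eqP ->.
by apply: eq_card0 => i; rewrite !inE; apply/andP=> -[/eqP ->]; apply/negP.
Qed.

Section GenLineGraph.
Variables (U : finType) (h : rel U) (f : U -> nat).
Notation T := (gl_vert h f).
Implicit Types (S : {set T}) (e : edge_t h) (v w : U).

Definition cp_index (q : cp_t f) : nat := (tagged q).1.
Definition cp_side (q : cp_t f) : bool := (tagged q).2.
Definition cp_x v (l : 'I_(f v)) : cp_t f :=
  @existT U (fun w => ('I_(f w) * bool)%type) v (l, false).
Definition cp_y v (l : 'I_(f v)) : cp_t f :=
  @existT U (fun w => ('I_(f w) * bool)%type) v (l, true).
Arguments cp_x : clear implicits.
Arguments cp_y : clear implicits.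
Definition hdeg v := #|[set e : edge_t h | v \in val e]|.

Lemma cp_index_lt (q : cp_t f) : cp_index q < f (tag q).
Proof. by case: q => v [l s]; apply: ltn_ord. Qed.

Lemma eq_cp (q1 q2 : cp_t f) :
  (q1 == q2) = [&& tag q1 == tag q2, cp_index q1 == cp_index q2 & cp_side q1 == cp_side q2].
Proof.
apply/eqP/and3P=> [->|[/eqP eq_v /eqP eq_l /eqP eq_s]]; first by rewrite !eqxx.
case: q1 q2 eq_v eq_l eq_s => v1 [l1 s1] [v2 [l2 s2]]; rewrite /cp_index /cp_side /= => eq_v.
by subst v2 => /val_inj -> ->.
Qed.

Lemma inr_eqE (q1 q2 : cp_t f) : (inr q1 == inr q2 :> T) = (q1 == q2).
Proof. by apply/eqP/eqP=> [[]|->]. Qed.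

(* The clique cover: [inl q], for [q = x_l] in [Q_v], is [E(v) + x_l + {y_m | m <> l}];
   [inr (v, Some false)] is [E(v) + {x_m}], [inr (v, Some true)] is [E(v) + {y_m}], and
   [inr (v, None)] is the star [E(v)], where [E(v)] is the set of edges of [H] at [v]. *)
Definition gl_clique := (cp_t f + (U * option bool))%type.

Definition in_gl_clique (i : gl_clique) : pred T := fun a =>
  match i, a with
  | inl q, inl e => tag q \in val e
  | inl q, inr q' => (tag q' == tag q) && ((cp_index q' == cp_index q) == ~~ cp_side q')
  | inr (v, _), inl e => v \in val e
  | inr (v, Some s), inr q' => (tag q' == v) && (cp_side q' == s)
  | inr (v, None), inr _ => false
  end.

Definition gl_clique_used (i : gl_clique) : bool :=
  match i with
  | inl q => ~~ cp_side q
  | inr (v, Some false) => 1 < f v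
  | inr (v, Some true) => 0 < f v
  | inr (v, None) => (f v == 0) && (1 < hdeg v)
  end.

Notation live := (live in_gl_clique gl_clique_used).
Notation live_deg := (live_deg in_gl_clique gl_clique_used).
Notation peelable := (peelable in_gl_clique gl_clique_used).

Lemma gl_adj_irr : irreflexive (gl_adj h f).
Proof. by case=> [e|q] /=; rewrite !eqxx. Qed.

Lemma gl_adj_edges e1 e2 v : v \in val e1 -> v \in val e2 -> e1 != e2 ->
  gl_adj h f (inl e1) (inl e2).
Proof. by move=> ve1 ve2 ne /=; rewrite ne; apply/pred0Pn; exists v; apply/andP. Qed.

Lemma gl_clique_complete i a b :
  gl_clique_used i -> in_gl_clique i a -> in_gl_clique i b -> a != b -> gl_adj h f a b.
Proof.
have edges e1 e2 v : v \in val e1 -> v \in val e2 -> inl e1 != inl e2 :> T ->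
    gl_adj h f (inl e1) (inl e2).
  by move=> ve1 ve2 ne; apply: gl_adj_edges ve1 ve2 _; apply: contra ne => /eqP ->.
case: i => [q|[v [s|]]] /= used_i; case: a => [e1|q1]; case: b => [e2|q2] //=;
  try by [apply: edges | move=> ? /andP [/eqP -> _] | move=> /andP [/eqP -> _]].
- move=> /andP [/eqP t1 /eqP i1] /andP [/eqP t2 /eqP i2].
  change (inr q1 != inr q2 :> T -> (tag q1 == tag q2) && (cp_index q1 != cp_index q2)).
  rewrite inr_eqE eq_cp t1 t2 eqxx /=; apply: contra => /eqP eq_idx.
  by move: i1; rewrite eq_idx i2 => /negb_inj ->; rewrite !eqxx.
- move=> /andP [/eqP t1 /eqP s1] /andP [/eqP t2 /eqP s2].
  change (inr q1 != inr q2 :> T -> (tag q1 == tag q2) && (cp_index q1 != cp_index q2)).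
  by rewrite inr_eqE eq_cp t1 t2 s1 s2 !eqxx /= andbT.
Qed.

Lemma hdeg_gt1 e1 e2 w : w \in val e1 -> w \in val e2 -> e1 != e2 -> 1 < hdeg w.
Proof.
move=> we1 we2 ne; apply: leq_trans (_ : 2 <= #|[set e1; e2]|) _; first by rewrite cards2 ne.
by apply/subset_leq_card/subsetP=> e; rewrite !inE => /orP [] /eqP ->.
Qed.

Lemma gl_cliques_cover a b : gl_adj h f a b ->
  exists2 i, gl_clique_used i & in_gl_clique i a && in_gl_clique i b.
Proof.
have f_tag_gt0 (q : cp_t f) : 0 < f (tag q) by apply: leq_ltn_trans (cp_index_lt q).
case: a => [e1|q1]; case: b => [e2|q2] /=.
- case/andP=> ne /pred0Pn [w /andP [we1 we2]].
  have {}we1 : w \in sval e1 := we1; have {}we2 : w \in sval e2 := we2.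
  have [fw0|fw_gt0] := posnP (f w).
    by exists (inr (w, None)); rewrite /= ?fw0 ?(hdeg_gt1 we1 we2 ne) //; apply/andP.
  by exists (inr (w, Some true)); rewrite /= ?fw_gt0 //; apply/andP.
- move=> q2e; case: (boolP (cp_side q2)) => s2.
    by exists (inr (tag q2, Some true)); rewrite /= ?q2e ?s2 ?eqxx ?f_tag_gt0.
  by exists (inl q2); rewrite /= ?q2e ?s2 ?eqxx.
- move=> q1e; case: (boolP (cp_side q1)) => s1.
    by exists (inr (tag q1, Some true)); rewrite /= ?q1e ?s1 ?eqxx ?f_tag_gt0.
  by exists (inl q1); rewrite /= ?q1e ?s1 ?eqxx.
- case/andP=> /eqP t ne; have {}ne : cp_index q1 != cp_index q2 := ne.
  case: (boolP (cp_side q1)) => s1; case: (boolP (cp_side q2)) => s2.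
  + by exists (inr (tag q1, Some true)); rewrite /= ?t ?s1 ?s2 ?eqxx ?f_tag_gt0.
  + by exists (inl q2); rewrite /= ?t ?s1 ?s2 ?eqxx ?(negbTE ne).
  + by exists (inl q1); rewrite /= ?t ?s1 ?s2 ?eqxx //= (eq_sym (cp_index q2)) (negbTE ne).
  + exists (inr (tag q1, Some false)); rewrite /= ?t ?(negbTE s1) ?(negbTE s2) ?eqxx //.
    by have := cp_index_lt q1; have := cp_index_lt q2; rewrite t; move: ne; lia.
Qed.

Definition edges_only S : Prop := forall a, a \in S -> if a is inl _ then true else false.
Definition star_live S v := live S (inr (v, None)).
Definition dead_stars S := [set v | gl_clique_used (inr (v, None)) && ~~ star_live S v].
Definition removed_edges S := #|[set e | inl e \notin S]|.

Lemma live_edges_only S i : edges_only S -> live S i -> exists v, i = inr (v, None).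
Proof.
move=> onlyS live_i; have /andP [used_i _] := live_i.
case: i used_i live_i => [q|[v [s|]]] /= used_i live_i; last by exists v.
  have : in_gl_clique (inl q) (inr q) by rewrite /= !eqxx used_i.
  by move=> /(live_mem live_i) /onlyS.
have fv_gt0 : 0 < f v by move: used_i; case: (s) => // /ltnW.
have : in_gl_clique (inr (v, Some s)) (inr (existT _ v (Ordinal fv_gt0, s))) by rewrite /= !eqxx.
by move=> /(live_mem live_i) /onlyS.
Qed.

Lemma card_edge e : #|val e| <= 2.
Proof.
by case: e => s /= /existsP [u /existsP [w /andP [_ /eqP ->]]]; rewrite cards2 ltnS leq_b1.
Qed.

Lemma live_deg_edge S e : edges_only S ->
  live_deg S (inl e) <= #|[set v in val e | star_live S v]|.
Proof.
move=> onlyS; apply: leq_trans (leq_imset_card (fun v => inr (v, None) : gl_clique) _).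
apply/subset_leq_card/subsetP=> i; rewrite inE => /andP [live_i in_i].
have [v Ei] := live_edges_only onlyS live_i; subst i.
by apply/imsetP; exists v => //; rewrite inE; apply/andP.
Qed.

Lemma removed_edgesD1 S e : inl e \in S -> removed_edges (S :\ inl e) = (removed_edges S).+1.
Proof.
move=> eS; rewrite /removed_edges.
have -> : [set e' | inl e' \notin S :\ inl e] = e |: [set e' | inl e' \notin S].
  apply/setP=> e'; rewrite !inE; case: (eqVneq e' e) => [->|ne]; first by rewrite eqxx.
  suff -> : inl e' != inl e :> T by [].
  by apply: contra ne => /eqP [->].
by rewrite cardsU1 inE eS.
Qed.

Lemma dead_starsD1 S e : inl e \in S ->
  #|dead_stars S| + #|[set v in val e | star_live S v]| <= #|dead_stars (S :\ inl e)|.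
Proof.
move=> eS; set E := [set v in val e | star_live S v].
have disjE : [disjoint dead_stars S & E].
  by apply/pred0P=> v; rewrite !inE; case: (star_live S v); rewrite ?andbF.
have [_] := leq_card_setU (dead_stars S) E; rewrite disjE => /eqP <-.
apply/subset_leq_card/subsetP=> v; rewrite !inE => /orP [/andP [used_v]|/andP [ve live_v]].
  by rewrite used_v; apply: contra; apply: live_subset; apply: subD1set.
have /andP [used_v _] := live_v; rewrite used_v /=.
by apply: (live_notin gl_clique_used (z := inl e)); rewrite /= ?ve // !inE eqxx.
Qed.

(* Double counting: a dead star has at least two edges, all of them removed once no
   remaining edge has a dead star end, and each removed edge has at most two ends. *)
Lemma dead_stars_le_removed S :
  (forall e, inl e \in S -> forall w, w \in val e -> star_live S w) ->
  #|dead_stars S| <= removed_edges S.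
Proof.
move=> ends_live.
have dead_deg v : v \in dead_stars S -> 1 < hdeg v by rewrite inE => /andP [/andP [_ ->]].
have dead_removed v e : v \in dead_stars S -> v \in val e -> inl e \notin S.
  rewrite inE => /andP [_ dead_v] ve; apply: contra dead_v => eS; exact: ends_live ve.
rewrite /removed_edges -(leq_pmul2r (isT : 0 < 2)) -!sum_nat_const.
apply: leq_trans (_ : \sum_(v in dead_stars S) hdeg v <= _); first exact: leq_sum dead_deg.
have -> : \sum_(v in dead_stars S) hdeg v =
          \sum_(v in dead_stars S) \sum_(e : edge_t h | v \in val e) 1.
  by apply: eq_bigr => v _; rewrite /hdeg -sum1_card; apply: eq_bigl => e; rewrite inE.
rewrite (exchange_big_dep (fun e : edge_t h => inl e \notin S)) /=; last exact: dead_removed.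
rewrite big_mkcond [X in _ <= X]big_mkcond /=; apply: leq_sum => e _.
rewrite inE; case: ifP => // _; rewrite sum1_card.
apply: leq_trans (card_edge e); apply/subset_leq_card/subsetP=> v.
by case/andP.
Qed.

Lemma edge_peel_step S b i : edges_only S -> 0 < b ->
  2 + removed_edges S <= b + #|dead_stars S| -> live S i ->
  exists2 e, inl e \in S & #|[set v in val e | star_live S v]| <= b.
Proof.
move=> onlyS b_gt0 inv live_i.
case: (boolP [exists e, (inl e \in S) && [exists w, (w \in val e) && ~~ star_live S w]]).
  case/existsP=> e /andP [eS /existsP [w /andP [we dead_w]]].
  exists e => //; apply: leq_trans b_gt0; apply: leq_trans (_ : #|val e :\ w| <= 1).
    apply/subset_leq_card/subsetP=> v; rewrite !inE => /andP [-> live_v]; rewrite andbT.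
    by apply: contraNneq dead_w => <-.
  by have := card_edge e; rewrite (cardsD1 w) we; case: #|_|.
move=> all_live; have ends_live e : inl e \in S -> forall w, w \in val e -> star_live S w.
  move=> eS w we; apply: contraNT all_live => dead_w; apply/existsP; exists e.
  by rewrite eS; apply/existsP; exists w; rewrite we.
have b_ge2 : 2 <= b by move: inv (dead_stars_le_removed ends_live); lia.
have [v Ei] := live_edges_only onlyS live_i; subst i.
have : 0 < hdeg v by case/andP: live_i => /andP [_ /ltnW].
case/card_gt0P=> e0; rewrite inE => ve0.
exists e0; first exact: (live_mem live_i).
apply: leq_trans (leq_trans (card_edge e0) b_ge2); apply/subset_leq_card/subsetP=> w.
by rewrite inE => /andP [].
Qed.

(* Removing an edge with [c] live star ends costs [c - 1] sinks and kills those
   [c] stars, which keeps the invariant [2 + removed_edges S <= b + #|dead_stars S|]. *)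
Lemma peelable_edges n S b : #|S| <= n -> edges_only S -> 0 < b ->
  2 + removed_edges S <= b + #|dead_stars S| -> peelable S b.
Proof.
elim: n S b => [|n IH] S b cardS onlyS b_gt0 inv.
  apply: peel_done => i; apply/negP => live_i.
  have [e eS _] := edge_peel_step onlyS b_gt0 inv live_i.
  by move: cardS; rewrite (cardsD1 (inl e)) eS.
case: (pickP (live S)) => [i live_i|dead]; last by apply: peel_done => i; rewrite dead.
have [e eS ends_le] := edge_peel_step onlyS b_gt0 inv live_i.
have deg_le := live_deg_edge e onlyS.
apply: (peel_step eS (leq_trans deg_le ends_le)); apply: IH => //.
- by move: cardS; rewrite (cardsD1 (inl e)) eS.
- by move=> a; rewrite inE => /andP [_ /onlyS].
- have budget r c E d d' : 2 + r <= b + d -> c <= E -> E <= b -> d + E <= d' ->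
    2 + r.+1 <= (b - c).+1 + d' by lia.
  by rewrite (removed_edgesD1 eS); apply: budget inv deg_le ends_le (dead_starsD1 eS).
Qed.

Lemma live_deg_cp_x S v (l : 'I_(f v)) :
  live_deg S (inr (cp_x v l)) <= 1 + live S (inr (v, Some false)).
Proof.
rewrite /live_deg /live_through -card_set_pred1.
set X := [set i | (i == inr (v, Some false)) && live S i].
apply: (@leq_trans #|inl (cp_x v l) |: X|); last first.
  by rewrite cardsU1 leq_add2r leq_b1.
apply/subset_leq_card/subsetP=> i; rewrite !inE => /andP [live_i].
case: i live_i => [q|[w [s|]]] //= live_i.
  case/andP=> /eqP tq idx_q; have /andP [/= x_q _] := live_i.
  apply/orP; left; apply/eqP; congr inl; apply/eqP; rewrite eq_cp.
  by move: idx_q; rewrite /= eqb_id eq_sym => ->; rewrite -tq eqxx (negbTE x_q).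
by case/andP=> /eqP vw /eqP sx; subst w s; rewrite live_i eqxx.
Qed.

Lemma live_deg_cp_y S v (l : 'I_(f v)) :
  (forall q, tag q = v -> ~~ cp_side q -> inr q \notin S) ->
  live_deg S (inr (cp_y v l)) <= live S (inr (v, Some true)).
Proof.
move=> no_x; rewrite /live_deg /live_through -card_set_pred1.
apply/subset_leq_card/subsetP=> i; rewrite !inE => /andP [live_i].
case: i live_i => [q|[w [s|]]] //= live_i.
  case/andP=> /eqP tq _; have /andP [/= x_q _] := live_i.
  have : in_gl_clique (inl q) (inr q) by rewrite /= !eqxx x_q.
  by move=> /(live_mem live_i); rewrite (negbTE (no_x q (esym tq) x_q)).
by case/andP=> /eqP vw /eqP sy; subst w s; rewrite live_i eqxx.
Qed.

Definition cp_block v t t' : {set T} := [set a : T | if a is inr q then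
  (tag q == v) && (cp_index q < if cp_side q then t' else t) else false].

(* [Q_v] is cleared by removing [x_(f v - 1), ..., x_0] and then [y_(f v - 1), ..., y_0]:
   only the first removal of each kind can meet [E(v) + {x_m}] resp. [E(v) + {y_m}], and
   once the x's are gone every removed y meets no live clique and so frees a sink. *)
Section Block.
Variables (v : U) (S0 : {set T}).
Hypothesis S0_out : forall q, inr q \in S0 -> tag q != v.
Hypothesis peelable_S0 : forall b, 1 < b -> peelable S0 b.

Lemma blockD1_x (l : 'I_(f v)) t' :
  (S0 :|: cp_block v l.+1 t') :\ inr (cp_x v l) = S0 :|: cp_block v l t'.
Proof.
apply/setP=> [[e|q]]; rewrite !inE //= inr_eqE eq_cp.
rewrite -[cp_side (cp_x v l)]/false -[cp_index (cp_x v l)]/(nat_of_ord l) eqbF_neg /=.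
have [/S0_out qv|_] := boolP (inr q \in S0); first by rewrite (negbTE qv).
case: (tag q == v) => //=; case: (cp_side q); rewrite ?andbF ?andbT //=.
by rewrite ltnS [X in _ = X]ltn_neqAle andbC.
Qed.

Lemma blockD1_y (l : 'I_(f v)) :
  (S0 :|: cp_block v 0 l.+1) :\ inr (cp_y v l) = S0 :|: cp_block v 0 l.
Proof.
apply/setP=> [[e|q]]; rewrite !inE //= inr_eqE eq_cp.
rewrite -[cp_side (cp_y v l)]/true -[cp_index (cp_y v l)]/(nat_of_ord l) eqb_id /=.
have [/S0_out qv|_] := boolP (inr q \in S0); first by rewrite (negbTE qv).
case: (tag q == v) => //=; case: (cp_side q); rewrite ?andbF ?andbT //=.
by rewrite ltnS [X in _ = X]ltn_neqAle andbC.
Qed.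

Lemma block0 : S0 :|: cp_block v 0 0 = S0.
Proof. by apply/setP=> -[e|q]; rewrite !inE /= ?orbF // if_same ltn0 andbF orbF. Qed.

Lemma cp_x_in_block (l : 'I_(f v)) t' : inr (cp_x v l) \in S0 :|: cp_block v l.+1 t'.
Proof. by rewrite !inE /= eqxx ltnSn orbT. Qed.

Lemma cp_y_in_block (l : 'I_(f v)) : inr (cp_y v l) \in S0 :|: cp_block v 0 l.+1.
Proof. by rewrite !inE /= eqxx ltnSn orbT. Qed.

Lemma cp_top_notin_block (s : bool) t t' (top_lt : (f v).-1 < f v) :
  (if s then t' else t) < f v ->
  inr (existT _ v (Ordinal top_lt, s)) \notin S0 :|: cp_block v t t'.
Proof.
move=> lt_f; rewrite !inE /= eqxx negb_or; apply/andP; split.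
  by apply/negP=> /S0_out; rewrite eqxx.
by rewrite -leqNgt -ltnS prednK // (leq_ltn_trans _ top_lt).
Qed.

Lemma x_clique_dead t t' : t < f v -> ~~ live (S0 :|: cp_block v t t') (inr (v, Some false)).
Proof.
move=> lt_t; have top_lt : (f v).-1 < f v by rewrite ltn_predL (leq_ltn_trans _ lt_t).
apply: (live_notin gl_clique_used (z := inr (cp_x v (Ordinal top_lt)))); first by rewrite /= !eqxx.
exact: (@cp_top_notin_block false).
Qed.

Lemma y_clique_dead t t' : t' < f v -> ~~ live (S0 :|: cp_block v t t') (inr (v, Some true)).
Proof.
move=> lt_t'; have top_lt : (f v).-1 < f v by rewrite ltn_predL (leq_ltn_trans _ lt_t').
apply: (live_notin gl_clique_used (z := inr (cp_y v (Ordinal top_lt)))); first by rewrite /= !eqxx.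
exact: (@cp_top_notin_block true).
Qed.

Lemma no_x_in_block t' q : tag q = v -> ~~ cp_side q -> inr q \notin S0 :|: cp_block v 0 t'.
Proof.
move=> tq x_q; rewrite !inE negb_or (negbTE x_q) ltn0 andbF andbT.
by apply/negP=> /S0_out; rewrite tq eqxx.
Qed.

Lemma peelable_y_prefix t' : t' < f v -> forall b, 2 <= b + t' ->
  peelable (S0 :|: cp_block v 0 t') b.
Proof.
elim: t' => [|t' IH] lt_t' b le2; first by rewrite block0; apply: peelable_S0; rewrite -(addn0 b).
pose l := Ordinal (ltnW lt_t').
have deg0 : live_deg (S0 :|: cp_block v 0 l.+1) (inr (cp_y v l)) = 0.
  apply/eqP; rewrite -leqn0 (leq_trans (live_deg_cp_y _ (@no_x_in_block _))) //.
  by rewrite leqn0 eqb0 y_clique_dead.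
apply: (peel_step (cp_y_in_block l)); rewrite deg0 // subn0 blockD1_y.
by apply: IH; [apply: ltnW | rewrite addSnnS].
Qed.

Lemma peelable_y_block : 0 < f v -> forall b, 0 < b -> 2 <= b + (f v).-1 ->
  peelable (S0 :|: cp_block v 0 (f v)) b.
Proof.
move=> fv_gt0 b b_gt0 le2; have top_lt : (f v).-1 < f v by rewrite ltn_predL.
pose top := Ordinal top_lt.
have -> : f v = top.+1 by rewrite /= prednK.
have deg_le1 : live_deg (S0 :|: cp_block v 0 top.+1) (inr (cp_y v top)) <= 1.
  exact: leq_trans (live_deg_cp_y _ (@no_x_in_block _)) (leq_b1 _).
apply: (peel_step (cp_y_in_block top)); first exact: leq_trans deg_le1 b_gt0.
rewrite blockD1_y; apply: peelable_mono (peelable_y_prefix top_lt le2).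
by move: deg_le1; lia.
Qed.

Lemma peelable_x_prefix : 0 < f v -> forall t, t < f v -> forall b, 0 < b ->
  2 <= b + (f v).-1 -> peelable (S0 :|: cp_block v t (f v)) b.
Proof.
move=> fv_gt0; elim=> [|t IH] lt_t b b_gt0 le2; first exact: peelable_y_block.
pose l := Ordinal (ltnW lt_t).
have deg_le1 : live_deg (S0 :|: cp_block v l.+1 (f v)) (inr (cp_x v l)) <= 1.
  by rewrite (leq_trans (live_deg_cp_x _ _)) // (negbTE (x_clique_dead _ lt_t)).
apply: (peel_step (cp_x_in_block l (f v))); first exact: leq_trans deg_le1 b_gt0.
rewrite blockD1_x; apply: peelable_mono (IH (ltnW lt_t) b b_gt0 le2).
by move: deg_le1; lia.
Qed.

Lemma peelable_block b : 1 < b -> peelable (S0 :|: cp_block v (f v) (f v)) b.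
Proof.
move=> b_gt1; have [fv0|fv_gt0] := posnP (f v); first by rewrite fv0 block0; apply: peelable_S0.
have top_lt : (f v).-1 < f v by rewrite ltn_predL.
pose top := Ordinal top_lt.
have E : f v = top.+1 by rewrite /= prednK.
rewrite [X in cp_block v X]E.
have deg_le : live_deg (S0 :|: cp_block v top.+1 (f v)) (inr (cp_x v top)) <= 1 + (1 < f v).
  apply: leq_trans (live_deg_cp_x _ _) _; rewrite leq_add2l.
  by case: (boolP (live _ _)) => // /andP [/= ->].
apply: (peel_step (cp_x_in_block top (f v))); first by move: deg_le b_gt1; case: (1 < f v); lia.
rewrite blockD1_x; apply: peelable_x_prefix => //; move: deg_le b_gt1 fv_gt0.
by case: (ltnP 1 (f v)) => /=; lia.
Qed.
End Block.

Definition gl_prefix (s : seq U) : {set T} :=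
  [set a : T | if a is inr q then tag q \in s else true].

Lemma peelable_gl_prefix s : uniq s -> forall b, 1 < b -> peelable (gl_prefix s) b.
Proof.
elim: s => [_ b b_gt1|v s IH /andP [vs uniq_s] b b_gt1].
  have no_removed : removed_edges (gl_prefix [::]) = 0 by apply: eq_card0 => e; rewrite !inE.
  apply: (peelable_edges (leqnn _)); [by case=> [e|q]; rewrite inE | exact: ltnW |].
  by rewrite no_removed addn0 (leq_trans b_gt1) ?leq_addr.
have S_out q : inr q \in gl_prefix s -> tag q != v.
  by rewrite inE; apply: contraTneq => ->.
have -> : gl_prefix (v :: s) = gl_prefix s :|: cp_block v (f v) (f v).
  apply/setP=> -[e|q]; rewrite !inE //= orbC; case: eqP => //= tq.
  by rewrite if_same -tq cp_index_lt !orbT.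
exact: peelable_block S_out (IH uniq_s) b b_gt1.
Qed.

Lemma gl_peelable : peelable [set: T] 2.
Proof.
have -> : [set: T] = gl_prefix (enum U) by apply/setP=> -[e|q]; rewrite !inE ?mem_enum.
exact: peelable_gl_prefix (enum_uniq _) _ _.
Qed.
End GenLineGraph.

Theorem theorem1p2 (G : sgraph) :
  is_gen_line_graph G -> competition_number G <= 2.
Proof.
case=> U [h [f [_ _ [phi [bij_phi adj_phi]]]]].
have [D reprD] := peelable_competition_repr (@gl_adj_irr U h f)
  (@gl_clique_complete U h f) (@gl_cliques_cover U h f) (gl_peelable h f).
have [DG reprDG] := competition_repr_iso bij_phi (fun x y => esym (adj_phi x y)) reprD.
exact/competition_number_le/(competition_repr_comp_repr reprDG).
Qed.
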